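(* Let $S$ and $T$ be two distinct finite symmetric generating sets of the finitely generated group $G$. Then, for any action $\Phi$ of $G$ on $X$ and any Borel measure $\mu$ on $X$: (i) $\Phi$ has shadowing with respect to $S$ if and only if it has shadowing with respect to $T$. (ii) $\Phi$ is topologically stable with respect to $S$ if and only if it is topologically stable with respect to $T$. (iii) $\Phi$ is persistent with respect to $S$ if and only if it is persistent with respect to $T$. (iv) $\Phi$ has $\mu$-shadowing with respect to $S$ if and only if it has $\mu$-shadowing with respect to $T$. (v) $\Phi$ is $\mu$-topologically stable with respect to $S$ if and only if it is $\mu$-topologically stable with respect to $T$. (vi) $\Phi$ is $\mu$-persistent with respect to $S$ if and only if it is $\mu$-persistent with respect to $T$.
   Context: $G$ is a finitely generated group and $(X,\mathcal{U})$ is a uniform space with uniformity $\mathcal{U}$ (whose members are called entourages). For $U,V\subset X\times X$, $U\circ V=\{(x,y)\mid \exists z,\ (x,z)\in U,(z,y)\in V\}$, and $D[x]=\{y\mid (x,y)\in D\}$. An action of $G$ on $X$ is a map $\Phi:G\times X\to X$ such that each $\Phi_g=\Phi(g,\cdot)$ is a uniform equivalence, $\Phi_e=\mathrm{id}$, and $\Phi_{g_1g_2}=\Phi_{g_1}\circ\Phi_{g_2}$; $Act(G,X)$ denotes the set of such actions. Generating sets are finite and symmetric. For a generating set $S$ and $D\in\mathcal{U}$: $\{x_g\}_{g\in G}$ is a $D$-pseudo orbit (w.r.t. $S$) if $(x_{sg},\Phi_s(x_g))\in D$ for all $s\in S$, $g\in G$; it is $E$-shadowed by $x$ if $(x_g,\Phi_g(x))\in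 E$ for all $g\in G$; it is through a set $B$ if $x_e\in B$. With respect to $S$: - $\Phi$ has shadowing if for every $E\in\mathcal{U}$ there is $D\in\mathcal{U}$ such that every $D$-pseudo orbit is $E$-shadowed by some point. - $\Phi$ is topologically stable if for every $E\in\mathcal{U}$ there is $D\in\mathcal{U}$ such that whenever $\Psi\in Act(G,X)$ satisfies $(\Psi_s(x),\Phi_s(x))\in D$ for all $x\in X$, $s\in S$, there is a continuous $f:X\to X$ with $\Phi_g\circ f=f\circ\Psi_g$ for all $g$ and $(x,f(x))\in E$ for all $x$. - $\Phi$ is persistent if for every $E$ there is $D$ such that for every such $\Psi$ and every $x\in X$ there is $y$ with $(\Psi_g(x),\Phi_g(y))\in E$ for all $g\in G$. - $\Phi$ has $\mu$-shadowing if for every $E$ there are $D$ and a measurable $B$ with $\mu(X\setminus B)=0$ such that every $D$-pseudo orbit through $B$ is $E$-shadowed by some point. - $\Phi$ is $\mu$-topologically stable if for every $E$ there is $D$ such that for every such $\Psi$ there is an upper semi-continuous compact-valued set-valued map $H:X\to\mathcal{P}(X)$ with measurable domain $Dom(H)=\{x\mid H(x)\neq\emptyset\}$ satisfying $\mu(X\setminus Dom(H))=0$, $\mu(H(x))=0$ for all $x$, $H(x)\subset E[x]$ for all $x$, and $\Phi_g\circ H=H\circ\Psi_g$ for all $g\in G$. ($H$ is upper semi-continuous if for every $x\in Dom(H)$ and open $O\supset H(x)$ there is $D'\in\mathcal{U}$ with $H(y)\subset O$ whenever $(x,y)\in D'$.) - $\Phi$ is $\mu$-persistent if for every $E$ there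 are $D$ and a measurable $B$ with $\mu(X\setminus B)=0$ such that for every such $\Psi$ and every $x\in B$ there is $y$ with $(\Psi_g(x),\Phi_g(y))\in E$ for all $g\in G$. *)

From HB Require Import structures.
From mathcomp Require Import all_boot all_order all_algebra.
From mathcomp Require Import monoid.
From mathcomp Require Import all_classical all_reals all_analysis.

Set Implicit Arguments.
Unset Strict Implicit.
Unset Printing Implicit Defensive.

Local Open Scope classical_set_scope.

Definition generates (G : groupType) (S : set G) : Prop :=
  forall P : set G,
    P 1%g -> (forall x y, P x -> P y -> P (x * y)%g) -> (forall x, P x -> P (x^-1)%g) ->
    S `<=` P -> P = setT.

Definition fin_sym_gen_set (G : groupType) (S : set G) : Prop :=
  [/\ finite_set S, (forall s, S s -> S (s^-1)%g) & generates S].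

Definition ent_comp (X : Type) (U V : set (X * X)) : set (X * X) :=
  [set xy | exists z, U (xy.1, z) /\ V (z, xy.2)].

Definition ent_sec (X : Type) (D : set (X * X)) (x : X) : set X :=
  [set y | D (x, y)].

Definition uniform_equiv (X : puniformType) (f : X -> X) : Prop :=
  unif_continuous f /\
  exists g : X -> X, [/\ cancel f g, cancel g f & unif_continuous g].

Definition is_action (G : groupType) (X : puniformType) (Phi : G -> X -> X) : Prop :=
  [/\ (forall g, uniform_equiv (Phi g)),
      Phi 1%g = id
    & forall g1 g2, Phi (g1 * g2)%g = Phi g1 \o Phi g2].

Definition pseudo_orbit (G : groupType) (X : puniformType) (Phi : G -> X -> X)
    (S : set G) (D : set (X * X)) (xs : G -> X) : Prop :=
  forall s g, S s -> D (xs (s * g)%g, Phi s (xs g)).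

Definition shadowed (G : groupType) (X : puniformType) (Phi : G -> X -> X)
    (E : set (X * X)) (xs : G -> X) (x : X) : Prop :=
  forall g, E (xs g, Phi g x).

Definition D_close (G : groupType) (X : puniformType) (Phi Psi : G -> X -> X)
    (S : set G) (D : set (X * X)) : Prop :=
  forall x s, S s -> D (Psi s x, Phi s x).

Definition has_shadowing (G : groupType) (X : puniformType) (Phi : G -> X -> X)
    (S : set G) : Prop :=
  forall E, entourage E -> exists2 D, entourage D &
    forall xs, pseudo_orbit Phi S D xs -> exists x, shadowed Phi E xs x.

Definition top_stable (G : groupType) (X : puniformType) (Phi : G -> X -> X)
    (S : set G) : Prop :=
  forall E, entourage E -> exists2 D, entourage D &
    forall Psi : G -> X -> X, is_action Psi -> D_close Phi Psi S D ->
      exists f : X -> X, [/\ continuous f,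
        (forall g, Phi g \o f = f \o Psi g) & (forall x, E (x, f x))].

Definition persistent (G : groupType) (X : puniformType) (Phi : G -> X -> X)
    (S : set G) : Prop :=
  forall E, entourage E -> exists2 D, entourage D &
    forall Psi : G -> X -> X, is_action Psi -> D_close Phi Psi S D ->
      forall x, exists y, forall g, E (Psi g x, Phi g y).

Notation borel_type X := (g_sigma_algebraType (@open X)).

Definition mu_shadowing (R : realType) (G : groupType) (X : puniformType)
    (mu : measure (borel_type X) R) (Phi : G -> X -> X)
    (S : set G) : Prop :=
  forall E, entourage E -> exists D, exists B : set (borel_type X),
    [/\ entourage D, measurable B, mu (~` B) = 0%E &
      forall xs, pseudo_orbit Phi S D xs -> B (xs 1%g) ->
        exists x, shadowed Phi E xs x].

Definition usc (X : puniformType) (H : X -> set X) : Prop :=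
  forall x, H x !=set0 -> forall O : set X, open O -> H x `<=` O ->
    exists2 D', entourage D' & forall y, D' (x, y) -> H y `<=` O.

Definition dom_sv (X : Type) (H : X -> set X) : set X := [set x | H x !=set0].

Definition mu_top_stable (R : realType) (G : groupType) (X : puniformType)
    (mu : measure (borel_type X) R) (Phi : G -> X -> X)
    (S : set G) : Prop :=
  forall E, entourage E -> exists2 D, entourage D &
    forall Psi : G -> X -> X, is_action Psi -> D_close Phi Psi S D ->
      exists H : X -> set X,
        [/\ usc H /\ (forall x, compact (H x)),
            measurable (dom_sv H : set (borel_type X)) /\
            mu (~` (dom_sv H : set (borel_type X))) = 0%E,
            (forall x, measurable (H x : set (borel_type X)) /\
                       mu (H x : set (borel_type X)) = 0%E),
            (forall x, H x `<=` ent_sec E x) &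
            (forall g x, Phi g @` H x = H (Psi g x))].

Definition mu_persistent (R : realType) (G : groupType) (X : puniformType)
    (mu : measure (borel_type X) R) (Phi : G -> X -> X)
    (S : set G) : Prop :=
  forall E, entourage E -> exists D, exists B : set (borel_type X),
    [/\ entourage D, measurable B, mu (~` B) = 0%E &
      forall Psi : G -> X -> X, is_action Psi -> D_close Phi Psi S D ->
        forall x, B x -> exists y, forall g, E (Psi g x, Phi g y)].

From HB Require Import structures.
From mathcomp Require Import all_boot all_order all_algebra.
From mathcomp Require Import monoid.
From mathcomp Require Import all_classical all_reals all_analysis.

(* Every element of T is a word in S, and pseudo-orbit defects propagate along
   words: (x_{g g' h}, Phi_g x_{g' h}) is small by the defect at g, and
   (Phi_g x_{g' h}, Phi_g (Phi_{g'} x_h)) is small because Phi_g is uniformly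
   continuous.  So for every entourage E some D makes each D-pseudo orbit
   w.r.t. S an E-pseudo orbit w.r.t. T, uniformly since T is finite.  An action
   Psi that is D-close to Phi on S has all its orbits D-pseudo orbits of Phi
   w.r.t. S, so closeness on S controls closeness on T as well.  The six
   properties see the generating set only through pseudo orbits and closeness
   on generators. *)

Set Implicit Arguments.
Unset Strict Implicit.
Unset Printing Implicit Defensive.

Local Open Scope classical_set_scope.

Section PseudoOrbits.
Variables (G : groupType) (X : puniformType) (Phi : G -> X -> X).

Lemma pseudo_orbitS (S : set G) (D D' : set (X * X)) (xs : G -> X) :
  D `<=` D' -> pseudo_orbit Phi S D xs -> pseudo_orbit Phi S D' xs.
Proof. by move=> sDD' po s g Ss; apply/sDD'/po. Qed.

Definition pseudo_orbit_refines (S T : set G) : Prop :=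
  forall E, entourage E -> exists2 D, entourage D &
    forall xs, pseudo_orbit Phi S D xs -> pseudo_orbit Phi T E xs.

Lemma refines_finite (S T : set G) : finite_set T ->
  (forall t, T t -> pseudo_orbit_refines S [set t]) -> pseudo_orbit_refines S T.
Proof.
move=> finT refT E entE.
have /choice [D DP] : forall t, exists D, T t -> entourage D /\
    forall xs, pseudo_orbit Phi S D xs -> pseudo_orbit Phi [set t] E xs.
  move=> t; have [Tt|nTt] := pselect (T t); last by exists setT.
  by have [D entD PD] := refT t Tt E entE; exists D.
exists (\bigcap_(t in T) D t).
  rewrite -(fset_setK finT); apply: (@filter_bigI _ _ _ D) => t.
  by rewrite in_fset_set // inE => /DP [].
move=> xs po t g Tt; apply: (DP t Tt).2 => //.
by apply: pseudo_orbitS po => ? /(_ t Tt).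
Qed.

Hypothesis Phi_act : is_action Phi.

Lemma actK (g : G) : cancel (Phi g) (Phi g^-1).
Proof.
have [_ Phi1 PhiM] := Phi_act.
by move=> x; rewrite -[RHS]/(id x) -Phi1 -(mulVg g) PhiM.
Qed.

Lemma refines1 (S : set G) : pseudo_orbit_refines S [set 1%g].
Proof.
have [_ Phi1 _] := Phi_act.
move=> E entE; exists E => // xs _ _ g ->.
by rewrite mul1g Phi1; apply: entourage_refl.
Qed.

Lemma refines_generator (S : set G) (s : G) :
  S s -> pseudo_orbit_refines S [set s].
Proof. by move=> Ss E entE; exists E => // xs po _ g ->; apply: po. Qed.

Lemma refinesM (S : set G) (g1 g2 : G) :
  pseudo_orbit_refines S [set g1] -> pseudo_orbit_refines S [set g2] ->
  pseudo_orbit_refines S [set (g1 * g2)%g].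
Proof.
move=> ref1 ref2 E entE; have [unifPhi _ PhiM] := Phi_act.
have splitE := entourage_split_ent entE.
have [D1 entD1 PD1] := ref1 _ splitE.
have [D2 entD2 PD2] := ref2 _ ((unifPhi g1).1 _ splitE).
exists (D1 `&` D2); first exact: filterI.
move=> xs po _ h ->; apply: (entourage_split (Phi g1 (xs (g2 * h)%g)) entE).
  rewrite -mulgA; apply: (PD1 xs _ g1 _ erefl).
  by apply: pseudo_orbitS po; apply: subIsetl.
rewrite PhiM; apply: (PD2 xs _ g2 _ erefl).
by apply: pseudo_orbitS po; apply: subIsetr.
Qed.

Lemma refinesV (S : set G) (g : G) :
  pseudo_orbit_refines S [set g] -> pseudo_orbit_refines S [set g^-1%g].
Proof.
move=> refg E entE; have [unifPhi _ _] := Phi_act.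
have [D entD PD] := refg _ ((unifPhi g^-1%g).1 _ (entourage_inv entE)).
exists D => // xs po _ h ->.
by have := PD xs po g (g^-1 * h)%g erefl; rewrite mulVKg /= actK.
Qed.

Lemma refines_generates (S T : set G) : generates S -> finite_set T ->
  pseudo_orbit_refines S T.
Proof.
move=> genS finT; apply: refines_finite => // t _.
have refS : [set g | pseudo_orbit_refines S [set g]] = setT.
  by apply: genS; [apply: refines1 | apply: refinesM | apply: refinesV
                  | move=> s; apply: refines_generator].
by have : [set g | pseudo_orbit_refines S [set g]] t by rewrite refS.
Qed.

Lemma orbit_pseudo_orbit (S : set G) (D : set (X * X)) (Psi : G -> X -> X)
    (x : X) :
  is_action Psi -> D_close Phi Psi S D -> pseudo_orbit Phi S D (Psi^~ x).
Proof. by move=> [_ _ PsiM] close s g Ss; rewrite PsiM; apply: close. Qed.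

Lemma D_close_refines (S T : set G) : pseudo_orbit_refines S T ->
  forall E, entourage E -> exists2 D, entourage D &
    forall Psi, is_action Psi -> D_close Phi Psi S D -> D_close Phi Psi T E.
Proof.
move=> refST E entE; have [D entD PD] := refST E entE.
exists D => // Psi actPsi close x t Tt; have [_ Psi1 _] := actPsi.
have := PD _ (orbit_pseudo_orbit x actPsi close) t 1%g Tt.
by rewrite mulg1 Psi1.
Qed.

Lemma has_shadowing_refines (S T : set G) : pseudo_orbit_refines T S ->
  has_shadowing Phi S -> has_shadowing Phi T.
Proof.
move=> refTS shS E entE; have [D1 entD1 shD1] := shS E entE.
by have [D entD PD] := refTS D1 entD1; exists D => // xs /PD /shD1.
Qed.

Lemma mu_shadowing_refines (R : realType) (mu : measure (borel_type X) R)
    (S T : set G) : pseudo_orbit_refines T S ->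
  mu_shadowing mu Phi S -> mu_shadowing mu Phi T.
Proof.
move=> refTS shS E entE; have [D1 [B [entD1 mB muB shD1]]] := shS E entE.
by have [D entD PD] := refTS D1 entD1; exists D, B; split => // xs /PD /shD1.
Qed.

Lemma perturbation_refines (S T : set G)
    (P : set (X * X) -> (G -> X -> X) -> Prop) : pseudo_orbit_refines T S ->
  (forall E, entourage E -> exists2 D, entourage D &
     forall Psi, is_action Psi -> D_close Phi Psi S D -> P E Psi) ->
  (forall E, entourage E -> exists2 D, entourage D &
     forall Psi, is_action Psi -> D_close Phi Psi T D -> P E Psi).
Proof.
move=> refTS stS E entE; have [D1 entD1 PD1] := stS E entE.
have [D entD PD] := D_close_refines refTS entD1.
by exists D => // Psi actPsi /(PD _ actPsi) /(PD1 _ actPsi).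
Qed.

Lemma mu_persistent_refines (R : realType) (mu : measure (borel_type X) R)
    (S T : set G) : pseudo_orbit_refines T S ->
  mu_persistent mu Phi S -> mu_persistent mu Phi T.
Proof.
move=> refTS perS E entE; have [D1 [B [entD1 mB muB PD1]]] := perS E entE.
have [D entD PD] := D_close_refines refTS entD1.
by exists D, B; split => // Psi actPsi /(PD _ actPsi) /(PD1 _ actPsi).
Qed.

End PseudoOrbits.

Theorem lemma2p5 (R : realType) (G : groupType) (X : puniformType)
    (S T : set G) (Phi : G -> X -> X)
    (mu : measure (borel_type X) R) :
  fin_sym_gen_set S -> fin_sym_gen_set T -> S <> T ->
  is_action Phi ->
  ((has_shadowing Phi S <-> has_shadowing Phi T) /\
   (top_stable Phi S <-> top_stable Phi T) /\
   (persistent Phi S <-> persistent Phi T) /\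
   (mu_shadowing mu Phi S <-> mu_shadowing mu Phi T) /\
   (mu_top_stable mu Phi S <-> mu_top_stable mu Phi T) /\
   (mu_persistent mu Phi S <-> mu_persistent mu Phi T)).
Proof.
move=> [finS _ genS] [finT _ genT] _ actPhi.
have refST := refines_generates actPhi genS finT.
have refTS := refines_generates actPhi genT finS.
split; first by split; apply: has_shadowing_refines.
split; first by split; apply: perturbation_refines.
split; first by split; apply: perturbation_refines.
split; first by split; apply: mu_shadowing_refines.
split; first by split; apply: perturbation_refines.
by split; apply: mu_persistent_refines.
Qed.
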